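(* Let $X$ be a real normed linear space and let $\Omega_1,\Omega_2\subset X$ be nonempty convex sets such that $\operatorname{int}\Omega_1\neq\emptyset$ and $(\operatorname{int}\Omega_1)\cap\Omega_2=\emptyset$. Then $\Omega_1$ and $\Omega_2$ form an extremal system. Furthermore, $\operatorname{int}(\Omega_1-\Omega_2)\neq\emptyset$.
   Context: Two nonempty sets $\Omega_1,\Omega_2\subset X$ form an extremal system if for every $\varepsilon>0$ there exists $a\in X$ with $\|a\|\le\varepsilon$ and $(\Omega_1+a)\cap\Omega_2=\emptyset$. $\Omega_1-\Omega_2=\{x-y\mid x\in\Omega_1,\ y\in\Omega_2\}$, and $\operatorname{int}$ denotes the topological interior. *)

From HB Require Import structures.
From mathcomp Require Import all_boot all_order all_algebra.
From mathcomp Require Import all_classical all_reals all_analysis.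
Set Implicit Arguments. Unset Strict Implicit. Unset Printing Implicit Defensive.
Import Order.TTheory GRing.Theory Num.Theory.
Import numFieldNormedType.Exports.
Local Open Scope classical_set_scope.
Local Open Scope ring_scope.

Definition convex_in {R : realType} {X : normedModType R} (A : set X) : Prop :=
  forall x y (t : R), A x -> A y -> 0 <= t -> t <= 1 -> A (t *: x + (1 - t) *: y).

Definition extremal_system {R : realType} {X : normedModType R} (O1 O2 : set X) : Prop :=
  forall eps : R, 0 < eps ->
    exists a : X, `|a| <= eps /\ [set x + a | x in O1] `&` O2 = set0.

Definition set_diff_mink {R : realType} {X : normedModType R} (O1 O2 : set X) : set X :=
  [set z | exists x y, O1 x /\ O2 y /\ z = x - y].

(* If x0 is interior to O1 and y0 lies in O2, shifting O1 by any small positive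
   multiple a = c (x0 - y0) separates it from O2: a point x + a = y of O2 gives,
   with m = 1 / (1 + c), the point m y + (1 - m) y0 = m x + (1 - m) x0, which lies
   in O2 by convexity and in the interior of O1 by the line segment principle.
   The Minkowski difference contains the ball around x0 - y0 obtained by
   translating a ball around x0 inside O1. *)
From HB Require Import structures.
From mathcomp Require Import all_boot all_order all_algebra.
From mathcomp Require Import all_classical all_reals all_analysis.
From mathcomp Require Import ring.
Import Order.TTheory GRing.Theory Num.Theory.
Import numFieldNormedType.Exports.
Local Open Scope classical_set_scope.
Local Open Scope ring_scope.

Section ConvexInterior.
Context {R : realType} {X : normedModType R}.
Implicit Types (A B : set X) (x y : X).

Lemma interior_normP A x :
  interior A x <-> exists2 r : R, 0 < r & forall y, `|x - y| < r -> A y.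
Proof.
rewrite /interior nbhs_ballP; split.
  by move=> [r r0 Ar]; exists r => // y xy; apply: Ar; rewrite -ball_normE.
by move=> [r r0 Ar]; exists r => //= y; rewrite -ball_normE; apply: Ar.
Qed.

Lemma convex_interior_segment A x0 x (m : R) :
  convex_in A -> interior A x0 -> A x -> 0 <= m -> m < 1 ->
  interior A (m *: x + (1 - m) *: x0).
Proof.
move=> cA /interior_normP [r r0 Ar] Ax m0 m1.
have m1_gt0 : 0 < 1 - m by rewrite subr_gt0.
apply/interior_normP; exists ((1 - m) * r) => [|z hz]; first exact: mulr_gt0.
pose w := (1 - m)^-1 *: (z - m *: x).
have -> : z = m *: x + (1 - m) *: w.
  by rewrite /w scalerA divff ?gt_eqF // scale1r addrC subrK.
apply: cA => //; last exact: ltW.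
apply: Ar; rewrite -(ltr_pM2l m1_gt0) -[1 - m]ger0_norm ?ltW // -normrZ.
suff -> : (1 - m) *: (x0 - w) = m *: x + (1 - m) *: x0 - z by rewrite ger0_norm ?ltW.
by rewrite /w scalerBr scalerA divff ?gt_eqF // scale1r opprB addrA [_ + m *: x]addrC.
Qed.

Lemma interior_diff_mink A B x0 y0 :
  interior A x0 -> B y0 -> interior (set_diff_mink A B) (x0 - y0).
Proof.
move=> /interior_normP [r r0 Ar] By0; apply/interior_normP; exists r => // z hz.
exists (z + y0), y0; split; last by split => //; rewrite addrK.
by apply: Ar; rewrite opprD addrA addrAC.
Qed.

Lemma convex_shift_disjoint A B x0 y0 (c : R) :
  convex_in A -> convex_in B -> interior A x0 -> B y0 ->
  interior A `&` B = set0 -> 0 < c ->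
  [set x + c *: (x0 - y0) | x in A] `&` B = set0.
Proof.
move=> cA cB iAx0 By0 AB c0; rewrite -subset0 => _ [[x Ax <-] Bxa].
have c1_gt0 : 0 < 1 + c by rewrite addr_gt0.
pose m := (1 + c)^-1.
have m0 : 0 <= m by rewrite invr_ge0 ltW.
have m1 : m < 1 by rewrite invf_lt1 // ltrDl.
have mc : m * c = 1 - m by rewrite /m; field; rewrite gt_eqF.
have := cB _ _ m Bxa By0 m0 (ltW m1).
rewrite scalerDr scalerA mc scalerBr addrA subrK => Bz.
have iAz : interior A (m *: x + (1 - m) *: x0) by exact: convex_interior_segment.
have : (interior A `&` B) (m *: x + (1 - m) *: x0) by split.
by rewrite AB.
Qed.

Lemma exists_pos_scale_norm_le x (eps : R) :
  0 < eps -> exists2 c : R, 0 < c & `|c *: x| <= eps.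
Proof.
move=> eps0; have d0 : 0 < `|x| + 1 by rewrite ltr_wpDl.
exists (eps / (`|x| + 1)); first by rewrite divr_gt0.
rewrite normrZ gtr0_norm ?divr_gt0 // mulrAC ler_pdivrMr // ler_pM2l //.
by rewrite lerDl.
Qed.

End ConvexInterior.

Theorem corollary2p3 (R : realType) (X : normedModType R) (O1 O2 : set X) :
  O1 !=set0 -> O2 !=set0 -> convex_in O1 -> convex_in O2 ->
  (interior O1) !=set0 -> (interior O1) `&` O2 = set0 ->
  extremal_system O1 O2 /\ (interior (set_diff_mink O1 O2)) !=set0.
Proof.
move=> _ [y0 O2y0] cO1 cO2 [x0 iO1x0] disj; split.
  move=> eps eps0; have [c c0 small] := exists_pos_scale_norm_le (x0 - y0) _ eps0.
  by exists (c *: (x0 - y0)); split; last exact: convex_shift_disjoint.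
by exists (x0 - y0); exact: interior_diff_mink.
Qed.
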